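(* Fix integers $d\ge 1$ and $n\ge 1$. Then $$\sum_{\lambda\in\mathcal{H}_n} |\{i: 1\le i<\ell(\lambda),\ \lambda_i-\lambda_{i+1}<d\}| \;\ge\; \sum_{\lambda\in\mathcal{H}_n} |\{i: 1\le i\le \ell(\lambda),\ \lambda_i\not\equiv 1 \pmod{d+1}\}|.$$ That is, the total number of indices $i$ with $1\le i<\ell(\lambda)$ and $\lambda_i-\lambda_{i+1}<d$, over all $\lambda\in\mathcal{H}_n$, is at least the total number of parts not congruent to $1$ modulo $d+1$, over all $\lambda\in\mathcal{H}_n$.
   Context: A partition is a finite nonempty weakly decreasing sequence $\lambda=(\lambda_1,\ldots,\lambda_k)$ of positive integers; $\ell(\lambda)=k$ is its number of parts. The perimeter of $\lambda$ is $\Gamma(\lambda)=\lambda_1+\ell(\lambda)-1$, and $\mathcal{H}_n$ is the set of partitions with perimeter $n$. *)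

From mathcomp Require Import all_boot.
Set Implicit Arguments. Unset Strict Implicit. Unset Printing Implicit Defensive.

Definition is_partition (s : seq nat) : bool :=
  [&& s != [::], 0 \notin s & sorted geq s].

Definition perimeter (s : seq nat) : nat := head 0 s + size s - 1.

Definition inH (n : nat) (s : seq nat) : bool :=
  is_partition s && (perimeter s == n).

(* |{ i : 1 <= i < ell(lambda), lambda_i - lambda_{i+1} < d }|
   (0-based indices i = 0 .. size s - 2). *)
Definition small_gaps (d : nat) (s : seq nat) : nat :=
  count (fun i => nth 0 s i - nth 0 s i.+1 < d) (iota 0 (size s).-1).

Definition parts_not_1_mod (d : nat) (s : seq nat) : nat :=
  count (fun x => x != 1 %[mod d.+1]) s.

(* Sum of f over H_n.  Every lambda in H_n has ell(lambda) <= n and all parts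
   <= n, so it occurs exactly once as a k.-tuple of 'I_n.+1 with k <= n. *)
Definition sumH (n : nat) (f : seq nat -> nat) : nat :=
  \sum_(k < n.+1) \sum_(t : k.-tuple 'I_n.+1 | inH n (map val t)) f (map val t).

From mathcomp Require Import all_boot zify.
Set Implicit Arguments. Unset Strict Implicit. Unset Printing Implicit Defensive.

(* Removing the first part maps H_n minus {(n)} bijectively onto the pairs
   (c, μ) with 1 <= c < n and μ in H_(n-c), via λ = (μ_1 + c - 1) :: μ; then
   λ_1 - λ_2 = c - 1.  Both sides thus satisfy a recursion over c, and by
   strong induction on n it suffices to compare the first-part contributions:
   Σ_(c <= d) |H_(n-c)| = Σ_(c <= d) 2^(n-1-c) on the left against
   #{λ in H_n | λ_1 ≢ 1 mod d+1} on the right.  Counting λ in H_n by their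
   first part obeys a Pascal recurrence; since any d+1 consecutive integers
   contain one ≡ 1, at least 2^(n-1-d) of the 2^(n-1) elements of H_n have
   λ_1 ≡ 1, which is exactly what is needed. *)

Fixpoint perim_parts_fuel (fuel n : nat) : seq (seq nat) :=
  if fuel is fuel'.+1 then
    if n is 0 then [::] else
    [:: n] :: [seq head 0 m + c - 1 :: m | c <- index_iota 1 n, m <- perim_parts_fuel fuel' (n - c)]
  else [::].

Definition perim_parts (n : nat) : seq (seq nat) := perim_parts_fuel n n.

Lemma perim_parts_fuel_eq fuel fuel' n :
  n <= fuel -> n <= fuel' -> perim_parts_fuel fuel n = perim_parts_fuel fuel' n.
Proof.
elim: fuel fuel' n => [|fuel IH] [|fuel'] [|n] //= le_n_fuel le_n_fuel'.
congr (_ :: flatten _); apply/eq_in_map => c; rewrite mem_index_iota => /andP[c_gt0 c_lt].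
by congr map; apply: IH; lia.
Qed.

Lemma perim_partsE n : perim_parts n = if n is 0 then [::] else
  [:: n] :: [seq head 0 m + c - 1 :: m | c <- index_iota 1 n, m <- perim_parts (n - c)].
Proof.
case: n => // n; rewrite /perim_parts /=.
congr (_ :: flatten _); apply/eq_in_map => c; rewrite mem_index_iota => /andP[c_gt0 c_lt].
by congr map; apply: perim_parts_fuel_eq; lia.
Qed.

Lemma big_perim_parts n (F : seq nat -> nat) : 0 < n ->
  \sum_(s <- perim_parts n) F s =
  F [:: n] + \sum_(1 <= c < n) \sum_(m <- perim_parts (n - c)) F (head 0 m + c - 1 :: m).
Proof.
case: n => // n _; rewrite perim_partsE big_cons big_flatten /= big_map.
by congr (_ + _); apply: eq_bigr => c _; rewrite big_map.
Qed.

Lemma inH_neq_nil n s : inH n s -> s != [::].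
Proof. by case/andP => /and3P[]. Qed.

Lemma inH_gt0 n s : inH n s -> 0 < n.
Proof.
case: s => [|a s]; first by rewrite /inH /is_partition.
rewrite /inH /is_partition /perimeter /= inE negb_or => /andP[/andP[/andP[a_gt0 _] _] /eqP <-].
lia.
Qed.

Lemma inH_singleton n : 0 < n -> inH n [:: n].
Proof. by move=> n_gt0; rewrite /inH /is_partition /perimeter /= inE; lia. Qed.

Lemma inH_cons n c m : 1 <= c < n -> inH (n - c) m -> inH n (head 0 m + c - 1 :: m).
Proof.
case: m => [|b m] c_bounds; first by rewrite /inH /is_partition.
rewrite /inH /is_partition /perimeter /= !inE !negb_or.
case/andP => /andP[/andP[b_gt0 m_pos] m_sorted] /eqP perim_m.
by rewrite m_pos m_sorted b_gt0 !andbT; apply/andP; split; [apply/andP; split | apply/eqP]; lia.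
Qed.

Lemma inH_cases n s : inH n s -> s = [:: n] \/
  exists c m, [/\ 1 <= c < n, inH (n - c) m & s = head 0 m + c - 1 :: m].
Proof.
case: s => [|a [|b m]]; first by rewrite /inH /is_partition.
  by rewrite /inH /perimeter /= => /andP[_ /eqP <-]; left; congr [:: _]; lia.
rewrite /inH /is_partition /perimeter /= !inE !negb_or.
case/andP => /andP[/and3P[a_gt0 b_gt0 m_pos] /andP[b_le_a m_sorted]] /eqP perim_s.
right; exists (a - b + 1), (b :: m); split => /=.
- lia.
- by rewrite inE negb_or b_gt0 m_pos m_sorted; apply/eqP; lia.
- by congr (_ :: _); lia.
Qed.

Lemma mem_perim_parts n s : (s \in perim_parts n) = inH n s.
Proof.
elim/ltn_ind: n s => -[|n] IH s.
  by rewrite perim_partsE in_nil; apply/esym/negbTE/negP => /inH_gt0.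
rewrite perim_partsE in_cons; apply/idP/idP.
- case/orP => [/eqP -> | /allpairsPdep[c [m [c_in m_in ->]]]]; first exact: inH_singleton.
  rewrite mem_index_iota in c_in.
  by apply: inH_cons => //; rewrite -IH //; lia.
- case/inH_cases => [-> | [c [m [c_bounds m_inH ->]]]]; first by rewrite eqxx.
  apply/orP; right; apply/allpairsPdep; exists c, m.
  by rewrite mem_index_iota IH //; lia.
Qed.

Lemma perim_parts_uniq n : uniq (perim_parts n).
Proof.
elim/ltn_ind: n => -[|n] IH; first by rewrite perim_partsE.
rewrite perim_partsE cons_uniq; apply/andP; split.
  apply/negP => /allpairsPdep[c [m [_ m_in [_ m_nil]]]].
  by move: m_in; rewrite -m_nil mem_perim_parts => /inH_neq_nil.
apply: allpairs_uniq_dep => [|c c_in|].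
- exact: iota_uniq.
- by rewrite IH //; rewrite mem_index_iota in c_in; lia.
move=> _ _ /allpairsPdep[c1 [m1 [c1_in _ ->]]] /allpairsPdep[c2 [m2 [c2_in _ ->]]] /=.
move: c1_in c2_in; rewrite !mem_index_iota => c1_bounds c2_bounds [head_eq m_eq].
by subst m2; have -> : c1 = c2 by lia.
Qed.

Lemma inH_bounded n s : inH n s -> all (fun x => x < n.+1) s /\ size s < n.+1.
Proof.
case: s => [|a s]; first by rewrite /inH /is_partition.
rewrite /inH /is_partition /perimeter /= inE negb_or.
case/andP => /andP[/andP[a_gt0 _] s_sorted] /eqP perim_s.
have s_le_a : all (geq a) s.
  by apply: order_path_min s_sorted => x y z /= y_le_x z_le_y; apply: leq_trans z_le_y y_le_x.
split; last lia.
by rewrite /= ltnS; apply/andP; split; [lia | apply/allP => x /(allP s_le_a) /=; lia].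
Qed.

Lemma sum_tuples_inH n k (f : seq nat -> nat) :
  \sum_(t : k.-tuple 'I_n.+1 | inH n (map val t)) f (map val t)
  = \sum_(s <- perim_parts n | size s == k) f s.
Proof.
rewrite -(big_map (fun t : k.-tuple 'I_n.+1 => map val t) (inH n) f).
rewrite -[LHS]big_filter -[RHS]big_filter; apply/perm_big/uniq_perm.
- rewrite filter_uniq // map_inj_uniq ?index_enum_uniq //.
  by move=> t1 t2 /(inj_map val_inj) /val_inj.
- by rewrite filter_uniq // perim_parts_uniq.
move=> s; rewrite !mem_filter mem_perim_parts; apply/andP/andP.
  by case=> s_inH /mapP[t _ s_eq]; rewrite s_eq size_map size_tuple -s_eq.
case=> /eqP size_s s_inH; split=> //; apply/mapP.
have [s_bounded _] := inH_bounded s_inH.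
have size_inord : size (map (@inord n) s) == k by rewrite size_map size_s.
exists (Tuple size_inord); first exact: mem_index_enum.
rewrite /= -map_comp -[LHS]map_id; apply/eq_in_map => x /(allP s_bounded) x_le /=.
by rewrite inordK.
Qed.

Lemma sumHE n (f : seq nat -> nat) : sumH n f = \sum_(s <- perim_parts n) f s.
Proof.
rewrite /sumH (eq_bigr (fun k : 'I_n.+1 => \sum_(s <- perim_parts n | size s == k) f s));
  last by move=> k _; apply: sum_tuples_inH.
under eq_bigr do rewrite big_mkcond.
rewrite exchange_big /= big_seq [RHS]big_seq; apply: eq_bigr => s.
rewrite mem_perim_parts => /inH_bounded[_ size_s].
by rewrite -big_mkcond (big_pred1 (Ordinal size_s)).
Qed.

Section HeadSum.
Variable g : nat -> nat.

(* The shift [x] is what lets the Pascal recurrence [head_sumSS] close. *)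
Definition head_sum (n x : nat) : nat := \sum_(s <- perim_parts n) g (head 0 s + x).

Lemma head_sum_rec n x : 0 < n ->
  head_sum n x = g (n + x) + \sum_(1 <= c < n) head_sum (n - c) (x + c - 1).
Proof.
move=> n_gt0; rewrite /head_sum big_perim_parts //; congr (_ + _).
by apply: eq_big_nat => c c_bounds; apply: eq_bigr => m _ /=; congr g; lia.
Qed.

Lemma head_sum1 x : head_sum 1 x = g x.+1.
Proof. by rewrite /head_sum perim_partsE /= big_cons big_nil addn0 add1n. Qed.

Lemma head_sumSS n x : head_sum n.+2 x = head_sum n.+1 x + head_sum n.+1 x.+1.
Proof.
rewrite head_sum_rec // big_nat_recl // [head_sum n.+1 x.+1]head_sum_rec //.
rewrite subn1 addnK addnCA; congr (_ + (_ + _)); first by congr g; lia.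
by apply: eq_big_nat => c c_bounds; congr head_sum; lia.
Qed.

Lemma head_sum_gt0 n x k : k < n -> 0 < g (x + k.+1) -> 0 < head_sum n x.
Proof.
elim: n x k => [|[|n] IH] x k // k_lt g_gt0.
  by move: g_gt0; rewrite head_sum1 (_ : k = 0) ?addn1 //; lia.
rewrite head_sumSS addn_gt0; have [k_lt_n | k_ge_n] := ltnP k n.+1.
  by rewrite (IH x k).
by rewrite (IH x.+1 k.-1) ?orbT; [|lia|have -> : x.+1 + k.-1.+1 = x + k.+1 by lia].
Qed.

(* The Pascal recurrence doubles the bound at each step above [n = q]. *)
Lemma head_sum_window_ge q n x :
  (forall y, exists2 k, k < q & 0 < g (y + k.+1)) -> q <= n -> 2 ^ (n - q) <= head_sum n x.
Proof.
move=> g_window; have q_gt0 : 0 < q by have [k k_lt _] := g_window 0; lia.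
elim: n x => [|n IH] x q_le; first lia.
have [q_lt | q_ge] := ltnP q n.+1; last first.
  have [k k_lt g_gt0] := g_window x.
  by rewrite (_ : n.+1 - q = 0); [apply: head_sum_gt0 g_gt0; lia | lia].
case: n IH q_le q_lt => [|n] IH q_le q_lt; first lia.
by rewrite head_sumSS subSn // expnS mul2n -addnn leq_add ?IH.
Qed.

End HeadSum.

Lemma size_perim_parts n : 0 < n -> size (perim_parts n) = 2 ^ n.-1.
Proof.
suff head_sum_ones x : 0 < n -> head_sum (fun=> 1) n x = 2 ^ n.-1.
  by rewrite -(sum1_size (perim_parts n)) => /(head_sum_ones 0).
elim: n x => [|[|n] IH] x // _; first by rewrite head_sum1.
by rewrite head_sumSS !IH // expnS mul2n addnn.
Qed.

Lemma sum_pow2_upto N d :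
  \sum_(1 <= c < N.+1) (c <= d) * 2 ^ (N - c) + 2 ^ (N - d) = 2 ^ N.
Proof.
elim: N => [|N IH]; first by rewrite big_geq.
rewrite big_nat_recr //= subnn muln1.
have -> : \sum_(1 <= c < N.+1) (c <= d) * 2 ^ (N.+1 - c)
        = 2 * \sum_(1 <= c < N.+1) (c <= d) * 2 ^ (N - c).
  rewrite big_distrr; apply: eq_big_nat => c /andP[_ c_le].
  by rewrite subSn // expnS mulnCA.
have [d_le | d_gt] := leqP d N.
  by rewrite addn0 subSn // !expnS; lia.
move: IH; have [-> ->] : N - d = 0 /\ N.+1 - d = 0 by lia.
by rewrite expnS; lia.
Qed.

Section SmallGapsVsParts.
Variable d : nat.

Lemma exists_1mod_in_window x : exists2 k, k < d.+1 & x + k.+1 == 1 %[mod d.+1].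
Proof.
set k := (d.+1 - x %% d.+1) %% d.+1; exists k; first by rewrite ltn_pmod.
have x_k_mod : (x + k) %% d.+1 = 0.
  by rewrite -modnDml modnDmr subnKC ?modnn // ltnW // ltn_pmod.
by rewrite addnS -addn1 -modnDml x_k_mod.
Qed.

Lemma head_sum_1mod_ge n : 0 < n ->
  2 ^ (n.-1 - d) <= head_sum (fun y => y == 1 %[mod d.+1]) n 0.
Proof.
move=> n_gt0; have [d_lt | d_ge] := ltnP d n.
  rewrite (_ : n.-1 - d = n - d.+1); last lia.
  apply: head_sum_window_ge => // y.
  by have [k k_lt y_k_1mod] := exists_1mod_in_window y; exists k; rewrite ?y_k_1mod.
rewrite (_ : n.-1 - d = 0) ?expn0; last lia.
by apply: (@head_sum_gt0 _ _ _ 0); rewrite ?add0n ?eqxx.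
Qed.

Lemma head_sum_not_1mod_le n : 0 < n ->
  head_sum (fun y => y != 1 %[mod d.+1]) n 0 <= \sum_(1 <= c < n) (c <= d) * 2 ^ (n.-1 - c).
Proof.
move=> n_gt0.
have heads_split : head_sum (fun y => y != 1 %[mod d.+1]) n 0
                   + head_sum (fun y => y == 1 %[mod d.+1]) n 0 = 2 ^ n.-1.
  rewrite -size_perim_parts // -sum1_size /head_sum -big_split.
  by apply: eq_bigr => s _; case: (_ == _).
have := sum_pow2_upto n.-1 d; rewrite prednK //.
have := head_sum_1mod_ge n_gt0; lia.
Qed.

Lemma small_gaps_cons a m : m != [::] ->
  small_gaps d (a :: m) = (a - head 0 m < d) + small_gaps d m.
Proof.
case: m => // b m _; rewrite /small_gaps /=.
by rewrite (iotaDl 1 0) count_map.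
Qed.

Lemma sum_small_gaps_rec n : 0 < n ->
  \sum_(s <- perim_parts n) small_gaps d s =
  \sum_(1 <= c < n) ((c <= d) * 2 ^ (n.-1 - c) + \sum_(m <- perim_parts (n - c)) small_gaps d m).
Proof.
move=> n_gt0; rewrite big_perim_parts // add0n.
apply: eq_big_nat => c /andP[c_gt0 c_lt].
rewrite (_ : n.-1 - c = (n - c).-1); last lia.
rewrite -size_perim_parts ?subn_gt0 // -sum1_size big_distrr -big_split.
apply: eq_big_seq => m; rewrite mem_perim_parts => /inH_neq_nil m_nil.
rewrite small_gaps_cons //= muln1 (_ : head 0 m + c - 1 - head 0 m = c.-1); last lia.
by rewrite prednK.
Qed.

Lemma sum_parts_not_1_mod_rec n : 0 < n ->
  \sum_(s <- perim_parts n) parts_not_1_mod d s =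
  head_sum (fun y => y != 1 %[mod d.+1]) n 0
  + \sum_(1 <= c < n) \sum_(m <- perim_parts (n - c)) parts_not_1_mod d m.
Proof.
move=> n_gt0; rewrite big_perim_parts // /head_sum big_perim_parts // -addnA -big_split.
rewrite /= !addn0; congr (_ + _).
by apply: eq_big_nat => c _; rewrite -big_split; apply: eq_bigr => m _ /=; rewrite addn0.
Qed.

Lemma sum_parts_not_1_mod_le n :
  \sum_(s <- perim_parts n) parts_not_1_mod d s <= \sum_(s <- perim_parts n) small_gaps d s.
Proof.
elim/ltn_ind: n => -[|n] IH; first by rewrite perim_partsE !big_nil.
rewrite sum_parts_not_1_mod_rec // sum_small_gaps_rec // big_split /=.
apply: leq_add; first exact: head_sum_not_1mod_le.
rewrite big_nat_cond [X in _ <= X]big_nat_cond.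
by apply: leq_sum => c /andP[/andP[c_gt0 _] _]; apply: IH; lia.
Qed.

End SmallGapsVsParts.

Theorem theorem1p4 (d n : nat) (hd : 1 <= d) (hn : 1 <= n) :
  sumH n (parts_not_1_mod d) <= sumH n (small_gaps d).
Proof.
by rewrite !sumHE; apply: sum_parts_not_1_mod_le.
Qed.
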